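(* Let $(\chi_1,u_1)$ and $(\chi_2,u_2)$ be rooted realizable chirotopes. Then their join $(\chi_3,u_3)=(\chi_1,u_1)\vee(\chi_2,u_2)$ is a rooted realizable chirotope; that is, $\chi_3$ is a realizable chirotope and $u_3$ is an extreme element of $\chi_3$.
   Context: For a finite set $E$, $(E)_3$ is the set of ordered triples of distinct elements of $E$. A sign function on $E$ is a map $\chi:(E)_3\to\{-1,1\}$ with $\chi(x,y,z)=\chi(y,z,x)=\chi(z,x,y)=-\chi(z,y,x)=-\chi(y,x,z)=-\chi(x,z,y)$. A chirotope on $E$ is a sign function that moreover satisfies: (interiority) for distinct $t,x,y,z$, if $\chi(t,y,z)=\chi(x,t,z)=\chi(x,y,t)=1$ then $\chi(x,y,z)=1$; (transitivity) for distinct $s,t,x,y,z$, if $\chi(t,s,x)=\chi(t,s,y)=\chi(t,s,z)=\chi(x,y,t)=\chi(y,z,t)=1$ then $\chi(x,z,t)=1$. A chirotope is realizable if there are points $\mathfrak p_e\in\mathbb R^2$ ($e\in E$), no three collinear, such that $\chi(x,y,z)=1$ iff $\mathfrak p_x,\mathfrak p_y,\mathfrak p_z$ are in counterclockwise order. An element $x$ is extreme if there is $y\ne x$ such that $\chi(x,y,z)$ takes the same value for all $z\in E\setminus\{x,y\}$. A rooted chirotope is a pair $(\chi,u)$ with $\chi$ a chirotope on $X\cup\{u\}$ and $u\notin X$ an extreme element; it is realizable if $\chi$ is. For a rooted chirotope, $u^+$ (resp. $u^-$), the successor (resp. predecessor) of $u$ in counterclockwise order on the convex hull, is the element $y$ with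 $\chi(u,y,z)=1$ (resp. $\chi(y,u,z)=1$) for all $z\notin\{u,y\}$. Join: given rooted chirotopes $(\chi_1,u_1)$ on $X_1\cup\{u_1\}$ and $(\chi_2,u_2)$ on $X_2\cup\{u_2\}$, let $X_3$ be the disjoint union of $X_1$ and $X_2$ in which $u_1^-$ and $u_2^+$ are identified into one element $x_0$ (so $X_1,X_2\subseteq X_3$ with $X_1\cap X_2=\{x_0\}$), and let $u_3$ be a new element. The join $(\chi_3,u_3)$ has $\chi_3$ the sign function on $X_3\cup\{u_3\}$ determined (using symmetry) by: for $x,y,z\in X_3$, $\chi_3(x,y,z)=\chi_1(x,y,z)$ if $x,y,z\in X_1$; $=\chi_2(x,y,z)$ if $x,y,z\in X_2$; $=\chi_1(x,y,u_1)$ if $x,y\in X_1$ and $z\in X_2\setminus\{u_2^+\}$; $=\chi_2(u_2,y,z)$ if $x\in X_1\setminus\{u_1^-\}$ and $y,z\in X_2$; and for $x,y\in X_3$, $\chi_3(x,y,u_3)=\chi_1(x,y,u_1)$ if $x,y\in X_1$; $=\chi_2(x,y,u_2)$ if $x,y\in X_2$; $=1$ if $x\in X_1\setminus\{u_1^-\}$ and $y\in X_2\setminus\{u_2^+\}$. (These rules are consistent and determine $\chi_3$ on all triples.) *)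

From mathcomp Require Import all_boot.
From Stdlib Require Import Reals.

Set Implicit Arguments.
Unset Strict Implicit.
Unset Printing Implicit Defensive.

(* A sign function / chirotope on a finite set E is represented on a finType E,
   as a map chi : E -> E -> E -> bool, with [true] standing for +1 and
   [false] for -1; only its values on triples of distinct elements matter. *)

Section Chirotope.
Variable E : finType.
Variable chi : E -> E -> E -> bool.

Definition is_sign_function : Prop :=
  forall x y z : E, uniq [:: x; y; z] ->
    chi x y z = chi y z x /\ chi y x z = ~~ chi x y z.

Definition interiority : Prop :=
  forall t x y z : E, uniq [:: t; x; y; z] ->
    chi t y z -> chi x t z -> chi x y t -> chi x y z.

Definition transitivity : Prop :=
  forall s t x y z : E, uniq [:: s; t; x; y; z] ->
    chi t s x -> chi t s y -> chi t s z -> chi x y t -> chi y z t ->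
    chi x z t.

Definition chirotope : Prop :=
  [/\ is_sign_function, interiority & transitivity].

Definition orient (p q r : R * R) : R :=
  ((q.1 - p.1) * (r.2 - p.2) - (q.2 - p.2) * (r.1 - p.1))%R.

Definition realizable : Prop :=
  exists p : E -> R * R,
    forall x y z : E, uniq [:: x; y; z] ->
      orient (p x) (p y) (p z) <> 0%R /\
      (chi x y z = true <-> (0 < orient (p x) (p y) (p z))%R).

Definition extreme (x : E) : Prop :=
  exists y : E, y != x /\
    exists b : bool, forall z : E, z != x -> z != y -> chi x y z = b.

(* successor u^+ and predecessor u^- of u on the convex hull
   (default u if no such element exists; under the hypotheses it exists
   and is unique) *)
Definition succ (u : E) : E :=
  odflt u [pick y | (y != u) &&
                    [forall z, ((z != u) && (z != y)) ==> chi u y z]].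
Definition pred (u : E) : E :=
  odflt u [pick y | (y != u) &&
                    [forall z, ((z != u) && (z != y)) ==> chi y u z]].

Definition rooted_chirotope (u : E) : Prop := chirotope /\ extreme u.
Definition rooted_realizable (u : E) : Prop :=
  rooted_chirotope u /\ realizable.

End Chirotope.

(* Given (chi1,u1) on T1 = X1 u {u1} and (chi2,u2) on
   T2 = X2 u {u2}, the ground set X3 u {u3} is represented inside
   option (T1 + T2):
     None          = u3,
     Some (inl x)  = x in X1   (x <> u1); x0 is Some (inl u1^-),
     Some (inr y)  = y in X2 \ {u2^+}   (y <> u2, y <> u2^+).
   Thus u2^+ is identified with u1^- into x0.                              *)

Section Join.
Variables T1 T2 : finType.
Variable chi1 : T1 -> T1 -> T1 -> bool.
Variable u1 : T1.
Variable chi2 : T2 -> T2 -> T2 -> bool.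
Variable u2 : T2.

Local Notation raw := (option (T1 + T2))%type.

Definition u1m : T1 := pred chi1 u1.
Definition u2p : T2 := succ chi2 u2.

Definition in_join (a : raw) : bool :=
  match a with
  | None => true
  | Some (inl x) => x != u1
  | Some (inr y) => (y != u2) && (y != u2p)
  end.

Definition in1 (a : raw) : option T1 :=
  if a is Some (inl x) then Some x else None.

Definition in2 (a : raw) : option T2 :=
  match a with
  | Some (inr y) => Some y
  | Some (inl x) => if x == u1m then Some u2p else None
  | None => None
  end.

Definition is_x0 (a : raw) : bool := a == Some (inl u1m).

Definition in1' (a : raw) : bool := (in1 a != None) && ~~ is_x0 a.
Definition in2' (a : raw) : bool := (in2 a != None) && ~~ is_x0 a.

(* The defining rules of the join, for the ordered triple (a,b,c)
   exactly as listed (None when no rule applies to this ordering). *)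
Definition join_rule (a b c : raw) : option bool :=
  match c with
  | None =>
      if (in1 a, in1 b) is (Some x, Some y) then Some (chi1 x y u1)
      else if (in2 a, in2 b) is (Some x, Some y) then Some (chi2 x y u2)
      else if in1' a && in2' b then Some true
      else None
  | Some _ =>
      if (a == None) || (b == None) then None else
      if (in1 a, in1 b, in1 c) is (Some x, Some y, Some z)
        then Some (chi1 x y z)
      else if (in2 a, in2 b, in2 c) is (Some x, Some y, Some z)
        then Some (chi2 x y z)
      else if (in1 a, in1 b) is (Some x, Some y) then
        (if in2' c then Some (chi1 x y u1) else None)
      else if (in2 b, in2 c) is (Some y, Some z) then
        (if in1' a then Some (chi2 u2 y z) else None)
      else None
  end.

Fixpoint first_some (s : seq (option bool)) : bool :=
  match s with
  | [::] => true
  | Some v :: _ => v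
  | None :: s' => first_some s'
  end.

(* chi3 determined from the rules using the symmetries of a sign function *)
Definition join_chi_raw (a b c : raw) : bool :=
  first_some [:: join_rule a b c; join_rule b c a; join_rule c a b;
                 omap negb (join_rule b a c); omap negb (join_rule a c b);
                 omap negb (join_rule c b a)].

Definition join_type : finType := {a : raw | in_join a}.

Definition join_chi (a b c : join_type) : bool :=
  join_chi_raw (val a) (val b) (val c).

Definition join_root : join_type := exist (fun a : raw => in_join a) None isT.

End Join.

(* Work in homogeneous coordinates, where a realization assigns vectors of R^3 to
   the elements and the signs of the chirotope are those of 3x3 determinants.
   A projective map normalizes a realization of a rooted chirotope (chi, u) along
   a hull neighbour w of u: u goes to the vertical point at infinity e3, w to the
   origin e1 of the affine chart k1 = 1, and all other points into that chart, on
   one side of the vertical line through w.  Normalize (chi1, u1) along u1^-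
   (points on the left) and (chi2, u2) along u2^+ (points on the right), glue the
   two pictures at the origin x0, place u3 at e3, and shear the left and right
   halves vertically in opposite directions by s.  Each determinant of the glued
   configuration is affine in s: it is independent of s for triples inside one
   half or through u3, and for mixed triples its slope has exactly the sign the
   join prescribes, so a large s realizes chi3.  Then u3 = e3 is extreme, and
   realizability implies the chirotope axioms. *)

From Pilot Require Import Defs.
From mathcomp Require Import all_boot.
From Stdlib Require Import Reals Lra Psatz.

Set Implicit Arguments.
Unset Strict Implicit.
Unset Printing Implicit Defensive.

Local Open Scope R_scope.

Definition has_sign (b : bool) (x : R) : Prop := if b then 0 < x else x < 0.

Lemma has_signP b x : has_sign b x <-> x <> 0 /\ (b = true <-> 0 < x).
Proof.
case: b => /=; split=> [h | [h0 h]].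
- by split; [lra | split].
- exact: (proj1 h).
- by split; [lra | split=> // h'; exfalso; lra].
- by case: (Rtotal_order x 0) => [| [| /(proj2 h)]].
Qed.

Lemma has_sign_inj b b' x : has_sign b x -> has_sign b' x -> b = b'.
Proof. by case: b; case: b' => //= h h'; exfalso; lra. Qed.

Lemma has_signN b x : has_sign b (- x) <-> has_sign (~~ b) x.
Proof. by case: b => /=; split=> h; lra. Qed.

Lemma has_signM b k x : 0 < k -> has_sign b (k * x) <-> has_sign b x.
Proof. by case: b => /= k0; split=> h; nra. Qed.

Lemma has_sign_ge0 b x : 0 <= x -> has_sign b x -> b.
Proof. by case: b => //= h h'; exfalso; lra. Qed.

Definition eventually (P : R -> Prop) : Prop := exists s0, forall s, s0 <= s -> P s.

Lemma eventually_and (P Q : R -> Prop) :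
  eventually P -> eventually Q -> eventually (fun s => P s /\ Q s).
Proof.
move=> [s1 HP] [s2 HQ]; exists (Rmax s1 s2) => s hs.
by split; [apply: HP | apply: HQ]; apply: Rle_trans hs; [apply: Rmax_l | apply: Rmax_r].
Qed.

Lemma eventually_forall (X : finType) (P : X -> R -> Prop) :
  (forall x, eventually (P x)) -> eventually (fun s => forall x, P x s).
Proof.
move=> HP.
suff [s0 Hs0] : eventually (fun s => forall x, x \in enum X -> P x s).
  by exists s0 => s hs x; apply: Hs0 => //; rewrite mem_enum.
elim: (enum X) => [|x l IH]; first by exists 0.
have [s0 Hs0] := eventually_and (HP x) IH.
exists s0 => s hs y; rewrite inE => /orP [/eqP -> | yl].
  exact: (Hs0 s hs).1.
exact: (Hs0 s hs).2.
Qed.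

Lemma eventually_if (b : bool) (P : R -> Prop) :
  (b -> eventually P) -> eventually (fun s => b -> P s).
Proof. by case: b => [/(_ isT) [s0 HP] | _]; [exists s0 => s /HP | exists 0]. Qed.

Lemma eventually_pos_affine A B : 0 < B -> eventually (fun s => 0 < A + s * B).
Proof.
move=> B0; exists ((1 - A) / B) => s hs.
have : (1 - A) / B * B <= s * B by apply: Rmult_le_compat_r; lra.
have -> : (1 - A) / B * B = 1 - A by field; lra.
lra.
Qed.

Lemma eventually_sign A B :
  eventually (fun s => forall v, has_sign v B -> has_sign v (A + s * B)).
Proof.
case: (Rtotal_order B 0) => [Bn|[-> | Bp]].
- have [s0 Hs0] := eventually_pos_affine (- A) (ltac:(lra) : 0 < - B).
  exists s0 => s hs [] /= h; first lra.
  by have := Hs0 s hs; lra.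
- by exists 0 => s _ [] /= h; lra.
- have [s0 Hs0] := eventually_pos_affine A Bp.
  by exists s0 => s hs [] /= h; [apply: Hs0 | lra].
Qed.

Record v3 := V3 { k1 : R; k2 : R; k3 : R }.

Definition det3 (p q r : v3) : R :=
  k1 p * (k2 q * k3 r - k3 q * k2 r) - k2 p * (k1 q * k3 r - k3 q * k1 r)
  + k3 p * (k1 q * k2 r - k2 q * k1 r).

Definition e1 : v3 := V3 1 0 0.
Definition e3 : v3 := V3 0 0 1.
Definition hom (P : R * R) : v3 := V3 1 P.1 P.2.

Definition cross (a b : v3) : v3 :=
  V3 (k2 a * k3 b - k3 a * k2 b) (k3 a * k1 b - k1 a * k3 b) (k1 a * k2 b - k2 a * k1 b).
Definition scale (c : R) (q : v3) : v3 := V3 (c * k1 q) (c * k2 q) (c * k3 q).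
Definition flip2 (q : v3) : v3 := V3 (k1 q) (- k2 q) (k3 q).
Definition shear12 (t : R) (q : v3) : v3 := V3 (k1 q + t * k2 q) (k2 q) (k3 q).
Definition shear13 (t : R) (q : v3) : v3 := V3 (k1 q + t * k3 q) (k2 q) (k3 q).
Definition shear32 (t : R) (q : v3) : v3 := V3 (k1 q) (k2 q) (k3 q + t * k2 q).

Lemma det3_rot p q r : det3 q r p = det3 p q r.
Proof. by rewrite /det3; ring. Qed.

Lemma det3_swap p q r : det3 q p r = - det3 p q r.
Proof. by rewrite /det3; ring. Qed.

Lemma orient_hom P Q S : orient P Q S = det3 (hom P) (hom Q) (hom S).
Proof. by rewrite /orient /det3 /=; ring. Qed.

Lemma orient_rot P Q S : orient Q S P = orient P Q S.
Proof. by rewrite /orient; ring. Qed.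

Lemma orient_swap P Q S : orient Q P S = - orient P Q S.
Proof. by rewrite /orient; ring. Qed.

Lemma det3_e3 q r : det3 e3 q r = k1 q * k2 r - k2 q * k1 r.
Proof. by rewrite /det3 /=; ring. Qed.

Lemma det3_scale c p q r : det3 (scale c p) (scale c q) (scale c r) = c ^ 3 * det3 p q r.
Proof. by rewrite /det3 /=; ring. Qed.

Lemma det3_flip2 p q r : det3 (flip2 p) (flip2 q) (flip2 r) = - det3 p q r.
Proof. by rewrite /det3 /=; ring. Qed.

Lemma det3_shear12 t p q r : det3 (shear12 t p) (shear12 t q) (shear12 t r) = det3 p q r.
Proof. by rewrite /det3 /=; ring. Qed.

Lemma det3_shear13 t p q r : det3 (shear13 t p) (shear13 t q) (shear13 t r) = det3 p q r.
Proof. by rewrite /det3 /=; ring. Qed.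

Lemma det3_shear32 t p q r : det3 (shear32 t p) (shear32 t q) (shear32 t r) = det3 p q r.
Proof. by rewrite /det3 /=; ring. Qed.

Lemma flip2_e3 : flip2 e3 = e3.
Proof. by rewrite /flip2 /= Ropp_0. Qed.

Lemma flip2_e1 : flip2 e1 = e1.
Proof. by rewrite /flip2 /= Ropp_0. Qed.

Lemma uniq3 (T : eqType) (x y z : T) :
  uniq [:: x; y; z] = [&& x != y, x != z & y != z].
Proof. by rewrite /= !inE negb_or andbT andbA. Qed.

Lemma uniq3_swap (T : eqType) (x y z : T) : uniq [:: x; y; z] -> uniq [:: y; x; z].
Proof. by rewrite !uniq3 => /and3P [xy xz yz]; rewrite eq_sym xy yz xz. Qed.

Lemma uniq3_rot (T : eqType) (x y z : T) : uniq [:: x; y; z] -> uniq [:: y; z; x].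
Proof. by rewrite !uniq3 => /and3P [xy xz ->]; rewrite eq_sym xy eq_sym xz. Qed.

Section Realization.
Variables (T : finType) (chi : T -> T -> T -> bool).

Definition hrealizes (W : T -> v3) : Prop :=
  forall x y z, uniq [:: x; y; z] -> has_sign (chi x y z) (det3 (W x) (W y) (W z)).

Definition in_chart (u : T) (W : T -> v3) : Prop := forall x, x != u -> 0 < k1 (W x).

Lemma realizableP :
  realizable chi <-> exists p : T -> R * R, forall x y z, uniq [:: x; y; z] ->
    has_sign (chi x y z) (orient (p x) (p y) (p z)).
Proof. by split=> -[p Hp]; exists p => x y z u; apply/has_signP/Hp. Qed.

Lemma realizable_hrealizes : realizable chi -> exists W, hrealizes W.
Proof. by move=> /realizableP [p Hp]; exists (hom \o p) => x y z /Hp; rewrite orient_hom. Qed.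

Lemma hrealizes_comp (W : T -> v3) (f : v3 -> v3) (k : R) : 0 < k ->
  (forall p q r, det3 (f p) (f q) (f r) = k * det3 p q r) ->
  hrealizes W -> hrealizes (f \o W).
Proof. by move=> k0 detf HW x y z u; rewrite /= detf has_signM //; apply: HW. Qed.

Lemma hrealizes_swap (W : T -> v3) x y z : hrealizes W -> uniq [:: x; y; z] ->
  chi y x z = ~~ chi x y z.
Proof.
move=> HW u; have := HW _ _ _ (uniq3_swap u); rewrite det3_swap => /has_signN h.
by rewrite -(has_sign_inj h (HW _ _ _ u)) negbK.
Qed.

Lemma realizable_of_pos (W : T -> v3) : hrealizes W -> (forall x, 0 < k1 (W x)) ->
  realizable chi.
Proof.
move=> HW W0; apply/realizableP.
pose P x := (k2 (W x) / k1 (W x), k3 (W x) / k1 (W x)).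
exists P => x y z u; have := W0 x; have := W0 y; have := W0 z => hz hy hx.
have -> : orient (P x) (P y) (P z) = / (k1 (W x) * k1 (W y) * k1 (W z)) * det3 (W x) (W y) (W z).
  by rewrite /orient /det3 /=; field; lra.
apply/has_signM; last exact: HW.
by apply/Rinv_0_lt_compat/Rmult_lt_0_compat => //; apply: Rmult_lt_0_compat.
Qed.

Lemma realizable_of_chart (W : T -> v3) u : hrealizes W -> W u = e3 -> in_chart u W ->
  realizable chi.
Proof.
move=> HW Wu Wc.
have [t0 Ht0] : eventually (fun t => forall x, x != u -> 0 < k3 (W x) + t * k1 (W x)).
  apply: eventually_forall => x; apply: eventually_if => xu.
  exact: eventually_pos_affine (Wc x xu).
set t := Rmax t0 1; have t1 : 1 <= t by apply: Rmax_r.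
apply: (@realizable_of_pos (shear13 (/ t) \o W)).
  by apply: (@hrealizes_comp _ _ 1 Rlt_0_1) => // p q r; rewrite det3_shear13 Rmult_1_l.
move=> x /=; case: (eqVneq x u) => [-> | xu].
  by rewrite Wu /=; have := Rinv_0_lt_compat t; lra.
have := Ht0 t (Rmax_l _ _) x xu.
have -> : k1 (W x) + / t * k3 (W x) = / t * (k3 (W x) + t * k1 (W x)) by field; lra.
by move=> h; apply: Rmult_lt_0_compat => //; apply: Rinv_0_lt_compat; lra.
Qed.

End Realization.

Definition mirror (T : Type) (chi : T -> T -> T -> bool) : T -> T -> T -> bool :=
  fun x y z => chi y x z.

Lemma hrealizes_mirror (T : finType) (chi : T -> T -> T -> bool) (W : T -> v3) :
  hrealizes chi W -> hrealizes (mirror chi) (flip2 \o W).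
Proof. by move=> HW x y z u; rewrite /= det3_flip2 -det3_swap; apply: HW (uniq3_swap u). Qed.
Definition normal_map (a b q : v3) : v3 :=
  V3 (det3 q b (cross a b)) (- det3 a b q) (det3 a q (cross a b)).

Lemma det3_normal_map a b p q r :
  det3 (normal_map a b p) (normal_map a b q) (normal_map a b r)
  = det3 a b (cross a b) ^ 2 * det3 p q r.
Proof. by rewrite /normal_map /det3 /cross /=; ring. Qed.

Lemma normal_map_l a b : normal_map a b a = scale (det3 a b (cross a b)) e1.
Proof. by rewrite /normal_map /scale /=; congr V3; rewrite /det3; ring. Qed.

Lemma normal_map_r a b : normal_map a b b = scale (det3 a b (cross a b)) e3.
Proof. by rewrite /normal_map /scale /=; congr V3; rewrite /det3; ring. Qed.

Lemma det3_cross_pos a b c : det3 a b c <> 0 -> 0 < det3 a b (cross a b).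
Proof.
have -> : det3 a b c = k1 (cross a b) * k1 c + k2 (cross a b) * k2 c + k3 (cross a b) * k3 c.
  by rewrite /det3 /cross /=; ring.
have -> : det3 a b (cross a b) = k1 (cross a b) ^ 2 + k2 (cross a b) ^ 2 + k3 (cross a b) ^ 2.
  by rewrite /det3 /cross /=; ring.
move: (k1 (cross a b)) (k2 (cross a b)) (k3 (cross a b)) => X Y Z h.
apply: Rnot_le_lt => le; apply: h.
have [-> [-> ->]] : X = 0 /\ Y = 0 /\ Z = 0 by nra.
ring.
Qed.

Definition normalizer (a b : v3) (t : R) (q : v3) : v3 :=
  scale (/ det3 a b (cross a b)) (shear12 (- t) (normal_map a b q)).

Section Normalizer.
Variables (a b : v3) (t : R).
Hypothesis D0 : 0 < det3 a b (cross a b).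

Lemma det3_normalizer p q r :
  det3 (normalizer a b t p) (normalizer a b t q) (normalizer a b t r)
  = / det3 a b (cross a b) * det3 p q r.
Proof. by rewrite det3_scale det3_shear12 det3_normal_map; field; lra. Qed.

Lemma normalizer_l : normalizer a b t a = e1.
Proof.
by rewrite /normalizer normal_map_l /scale /shear12 /e1; cbn [k1 k2 k3]; congr V3; field; lra.
Qed.

Lemma normalizer_r : normalizer a b t b = e3.
Proof.
by rewrite /normalizer normal_map_r /scale /shear12 /e3; cbn [k1 k2 k3]; congr V3; field; lra.
Qed.

Lemma k1_normalizer q :
  k1 (normalizer a b t q) = / det3 a b (cross a b) * (k1 (normal_map a b q) + t * det3 a b q).
Proof. by rewrite /normalizer; set c := / _; rewrite /= /normal_map /=; ring. Qed.

End Normalizer.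

Record normal_realization (T : finType) (chi : T -> T -> T -> bool) (W : T -> v3) (u w : T)
  : Prop := NormalRealization {
  nr_hrealizes : hrealizes chi W;
  nr_root : W u = e3;
  nr_base : W w = e1;
  nr_chart : in_chart u W }.

Lemma nr_neq (T : finType) (chi : T -> T -> T -> bool) W u w :
  normal_realization chi W u w -> w != u.
Proof. by case=> _ Wu Ww _; apply/eqP => wu; move: Ww; rewrite wu Wu => /(congr1 k1) /=; lra. Qed.

Lemma normal_form_nondegenerate (T : finType) (chi : T -> T -> T -> bool) W u w x :
  hrealizes chi W -> w != u -> x != u -> x != w ->
  (forall x, x != u -> x != w -> chi w u x) -> exists W', normal_realization chi W' u w.
Proof.
move=> HW wu xu xw Hw; set a := W w; set b := W u; set D := det3 a b (cross a b).
have Hab y : y != u -> y != w -> 0 < det3 a b (W y).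
  move=> yu yw; have := HW w u y; rewrite Hw //; apply.
  by rewrite uniq3 wu !(eq_sym _ y) yu yw.
have D0 : 0 < D by apply: (det3_cross_pos (c := W x)); have := Hab x xu xw; lra.
have [t0 Ht0] : eventually (fun t => forall y, (y != u) && (y != w) ->
    0 < k1 (normal_map a b (W y)) + t * det3 a b (W y)).
  apply: eventually_forall => y; apply: eventually_if => /andP [yu yw].
  exact: eventually_pos_affine (Hab y yu yw).
exists (normalizer a b t0 \o W); split.
- apply: (@hrealizes_comp _ _ _ _ (/ D)) HW; first exact: Rinv_0_lt_compat.
  exact: det3_normalizer.
- exact: normalizer_r.
- exact: normalizer_l.
- move=> y yu; case: (eqVneq y w) => [-> | yw].
    by rewrite (_ : (normalizer a b t0 \o W) w = e1); [apply: Rlt_0_1 | apply: normalizer_l].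
  rewrite /comp k1_normalizer; apply: Rmult_lt_0_compat; first exact: Rinv_0_lt_compat.
  by apply: Ht0 (Rle_refl _) _ _; rewrite yu yw.
Qed.

Lemma normal_form_true (T : finType) (chi : T -> T -> T -> bool) W u w :
  hrealizes chi W -> w != u -> (forall x, x != u -> x != w -> chi w u x) ->
  exists W', normal_realization chi W' u w.
Proof.
move=> HW wu Hw; case: (pickP (fun x => (x != u) && (x != w))) => [x /andP [xu xw] | none].
  exact: normal_form_nondegenerate HW wu xu xw Hw.
have two x : (x == u) || (x == w) by have := none x; rewrite /= -negb_or => /negbFE.
exists (fun x => if x == u then e3 else e1); split => [x y z | | | x /negbTE -> /=].
- rewrite uniq3; move: (two x) (two y) (two z).
  by do 3 case/orP => /eqP ->; rewrite ?eqxx ?andbF.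
- by rewrite eqxx.
- by rewrite (negbTE wu).
- exact: Rlt_0_1.
Qed.

Lemma normal_form (T : finType) (chi : T -> T -> T -> bool) W u w b :
  hrealizes chi W -> w != u -> (forall x, x != u -> x != w -> chi w u x = b) ->
  exists W', normal_realization chi W' u w.
Proof.
case: b => HW wu Hw; first exact: normal_form_true HW wu Hw.
have [W' [HW' W'u W'w W'c]] : exists W', normal_realization (mirror chi) W' u w.
  apply: (normal_form_true (hrealizes_mirror HW) wu) => x xu xw.
  by rewrite /mirror (hrealizes_swap (x := w) HW) ?Hw // uniq3 wu !(eq_sym _ x) xu xw.
exists (flip2 \o W'); split.
- exact: hrealizes_mirror HW'.
- by rewrite /= W'u flip2_e3.
- by rewrite /= W'w flip2_e1.
- exact: W'c.
Qed.

Lemma seq_argmin (X : eqType) (f : X -> R) (x0 : X) (s : seq X) :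
  exists2 y, y \in x0 :: s & forall z, z \in x0 :: s -> f y <= f z.
Proof.
elim: s x0 => [|x s IH] x0.
  by exists x0 => [|z]; rewrite ?mem_seq1 // => /eqP ->; apply: Rle_refl.
have [y ys ymin] := IH x.
case: (Rle_lt_dec (f x0) (f y)) => [le | lt].
  exists x0 => [|z]; first by rewrite inE eqxx.
  by rewrite inE => /orP [/eqP -> | /ymin]; lra.
exists y => [|z]; first by rewrite inE ys orbT.
by rewrite inE => /orP [/eqP -> | /ymin]; lra.
Qed.

Lemma finite_argmin (X : finType) (P : pred X) (f : X -> R) x0 : P x0 ->
  exists y, P y /\ forall z, P z -> f y <= f z.
Proof.
move=> Px0; have [y ys ymin] := seq_argmin f x0 (enum P).
have inP z : z \in x0 :: enum P -> P z by rewrite inE mem_enum => /orP [/eqP -> |].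
exists y; split => [|z Pz]; first exact: inP.
by apply: ymin; rewrite inE mem_enum; apply/orP; right.
Qed.

Section Chart.
Variables (T : finType) (chi : T -> T -> T -> bool) (W : T -> v3) (u w : T).
Hypotheses (HW : hrealizes chi W) (Wu : W u = e3) (Wc : in_chart u W) (wu : w != u).

(* The point of least slope [k2 / k1] in the chart is the successor of the point at infinity. *)
Lemma chart_succ : exists y, y != u /\ forall z, z != u -> z != y -> chi u y z.
Proof.
have [y [yu ymin]] := finite_argmin (P := fun x => x != u) (fun x => k2 (W x) / k1 (W x)) wu.
exists y; split => // z zu zy.
apply: (@has_sign_ge0 _ (det3 (W u) (W y) (W z))); last first.
  by apply: HW; rewrite uniq3 !(eq_sym u) yu zu eq_sym zy.
have := ymin z zu; have := Wc yu; have := Wc zu; rewrite Wu det3_e3.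
move: (k1 (W y)) (k2 (W y)) (k1 (W z)) (k2 (W z)) => y1 y2 z1 z2 hz hy le.
have -> : y1 * z2 - y2 * z1 = y1 * z1 * (z2 / z1 - y2 / y1) by field; lra.
by apply: Rmult_le_pos; [nra | lra].
Qed.

End Chart.

Lemma chart_pred (T : finType) (chi : T -> T -> T -> bool) (W : T -> v3) u w :
  hrealizes chi W -> W u = e3 -> in_chart u W -> w != u ->
  exists y, y != u /\ forall z, z != u -> z != y -> chi y u z.
Proof.
move=> HW Wu Wc; apply: (chart_succ (hrealizes_mirror HW)) => //.
by rewrite /= Wu flip2_e3.
Qed.

Definition hull_pick (T : finType) (r : T -> T -> bool) (u : T) : T :=
  odflt u [pick y | (y != u) && [forall z, ((z != u) && (z != y)) ==> r y z]].

Lemma hull_pickP (T : finType) (r : T -> T -> bool) (u : T) :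
  (exists y, y != u /\ forall z, z != u -> z != y -> r y z) ->
  hull_pick r u != u /\ forall z, z != u -> z != hull_pick r u -> r (hull_pick r u) z.
Proof.
move=> [y [yu Hy]]; rewrite /hull_pick; case: pickP => [v /andP [vu /forallP Hv] | none] /=.
  by split=> // z zu zv; have := Hv z; rewrite zu zv.
have := none y; rewrite yu /= => /negP []; apply/forallP => z.
by apply/implyP => /andP [zu zy]; apply: Hy.
Qed.

Section Extreme.
Variables (T : finType) (chi : T -> T -> T -> bool) (u : T).
Hypotheses (Hr : realizable chi) (Hu : extreme chi u).

Lemma extreme_normal_form : exists w W, normal_realization chi W u w.
Proof.
have [W HW] := realizable_hrealizes Hr; have [w [wu [b Hb]]] := Hu.
exists w; apply: (normal_form (b := ~~ b) HW wu) => x xu xw.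
by rewrite (hrealizes_swap (x := u) HW) ?Hb // uniq3 eq_sym wu !(eq_sym _ x) xu xw.
Qed.

Lemma pred_spec :
  Defs.pred chi u != u /\
  forall z, z != u -> z != Defs.pred chi u -> chi (Defs.pred chi u) u z.
Proof.
have [w [W NW]] := extreme_normal_form; have [HW Wu _ Wc] := NW.
exact: (hull_pickP (r := fun y z => chi y u z)) (chart_pred HW Wu Wc (nr_neq NW)).
Qed.

Lemma succ_spec :
  Defs.succ chi u != u /\
  forall z, z != u -> z != Defs.succ chi u -> chi u (Defs.succ chi u) z.
Proof.
have [w [W NW]] := extreme_normal_form; have [HW Wu _ Wc] := NW.
exact: (hull_pickP (r := fun y z => chi u y z)) (chart_succ HW Wu Wc (nr_neq NW)).
Qed.

Lemma normal_form_pred : exists W, normal_realization chi W u (Defs.pred chi u).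
Proof.
have [W HW] := realizable_hrealizes Hr; have [pu Hp] := pred_spec.
exact: (normal_form (b := true) HW pu Hp).
Qed.

Lemma normal_form_succ : exists W, normal_realization chi W u (Defs.succ chi u).
Proof.
have [W HW] := realizable_hrealizes Hr; have [su Hs] := succ_spec.
apply: (normal_form (b := false) HW su) => x xu xs.
by rewrite (hrealizes_swap (x := u) HW) ?Hs // uniq3 eq_sym su !(eq_sym _ x) xu xs.
Qed.

End Extreme.

Ltac uniq_from H :=
  rewrite uniq3; apply/and3P; split; apply/eqP => E; subst;
  by move: H; rewrite /= !inE ?eqxx /= ?orbT ?andbF.

Lemma realizable_chirotope (T : finType) (chi : T -> T -> T -> bool) :
  realizable chi -> chirotope chi.
Proof.
move=> /realizableP [p Hp].
have pos x y z : uniq [:: x; y; z] -> chi x y z -> 0 < orient (p x) (p y) (p z).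
  by move=> u h; have := Hp _ _ _ u; rewrite h.
split.
- move=> x y z u; split.
    by apply: (has_sign_inj (Hp _ _ _ u)); rewrite -orient_rot; apply: Hp (uniq3_rot u).
  have := Hp _ _ _ (uniq3_swap u); rewrite orient_swap => /has_signN h.
  by rewrite -(has_sign_inj h (Hp _ _ _ u)) negbK.
- move=> t x y z u h1 h2 h3.
  have o1 := pos t y z ltac:(uniq_from u) h1.
  have o2 := pos x t z ltac:(uniq_from u) h2.
  have o3 := pos x y t ltac:(uniq_from u) h3.
  apply: (has_sign_ge0 _ (Hp x y z ltac:(uniq_from u))).
  have -> : orient (p x) (p y) (p z)
            = orient (p t) (p y) (p z) + orient (p x) (p t) (p z) + orient (p x) (p y) (p t).
    by rewrite /orient; ring.
  lra.
- move=> s t x y z u h1 h2 h3 h4 h5.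
  have o1 := pos t s x ltac:(uniq_from u) h1.
  have o2 := pos t s y ltac:(uniq_from u) h2.
  have o3 := pos t s z ltac:(uniq_from u) h3.
  have o4 := pos x y t ltac:(uniq_from u) h4.
  have o5 := pos y z t ltac:(uniq_from u) h5.
  apply: (has_sign_ge0 _ (Hp x z t ltac:(uniq_from u))).
  (* a Grassmann-Pluecker relation *)
  have GP : orient (p t) (p s) (p y) * orient (p x) (p z) (p t)
            = orient (p t) (p s) (p x) * orient (p y) (p z) (p t)
              + orient (p t) (p s) (p z) * orient (p x) (p y) (p t).
    by rewrite /orient; ring.
  nra.
Qed.

Lemma first_some_spec (P : bool -> Prop) (l : seq (option bool)) :
  (forall v, Some v \in l -> P v) -> has isSome l -> P (first_some l).
Proof.
elim: l => [//|[v|] l IH] Hl /= hl; first by apply: Hl; rewrite inE eqxx.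
by apply: IH => // v vl; apply: Hl; rewrite inE vl orbT.
Qed.

Ltac simpl_join := cbn -[Defs.in1 Defs.in2 Defs.in1' Defs.in2'].
Ltac case_option e := let E := fresh "E" in case E: e => [?|]; simpl_join.
Ltac case_bool e := let E := fresh "E" in case E: e; simpl_join.

Ltac case_memberships :=
  repeat match goal with
  | |- context [@Defs.in1 ?A ?B ?t] => case_option (@Defs.in1 A B t)
  | |- context [@Defs.in2 ?A ?B ?c1 ?w1 ?c2 ?w2 ?t] => case_option (@Defs.in2 A B c1 w1 c2 w2 t)
  | |- context [@Defs.in1' ?A ?B ?c1 ?w1 ?t] => case_bool (@Defs.in1' A B c1 w1 t)
  | |- context [@Defs.in2' ?A ?B ?c1 ?w1 ?c2 ?w2 ?t] => case_bool (@Defs.in2' A B c1 w1 c2 w2 t)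
  end.

Section Join.
Variables (T1 T2 : finType) (chi1 : T1 -> T1 -> T1 -> bool) (u1 : T1)
  (chi2 : T2 -> T2 -> T2 -> bool) (u2 : T2) (W1 : T1 -> v3) (W2 : T2 -> v3).

Local Notation raw := (option (T1 + T2)).
Local Notation x0 := (u1m chi1 u1).
Local Notation y0 := (u2p chi2 u2).
Local Notation in_join := (in_join u1 chi2 u2).
Local Notation in2 := (in2 chi1 u1 chi2 u2).
Local Notation in1' := (in1' chi1 u1 (T2 := T2)).
Local Notation in2' := (in2' chi1 u1 chi2 u2).
Local Notation rule := (join_rule chi1 u1 chi2 u2).
Local Notation chi3 := (@join_chi T1 T2 chi1 u1 chi2 u2).
Local Notation root := (@join_root T1 T2 u1 chi2 u2).

Hypotheses (N1 : normal_realization chi1 W1 u1 x0) (N2 : normal_realization chi2 W2 u2 y0).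
Hypothesis x0_pred : forall x, x != u1 -> x != x0 -> chi1 x0 u1 x.
Hypothesis y0_succ : forall y, y != u2 -> y != y0 -> chi2 u2 y0 y.

Lemma W1_left x : x != u1 -> x != x0 -> k2 (W1 x) < 0.
Proof.
move=> xu xx0; have u : uniq [:: x0; u1; x] by rewrite uniq3 (nr_neq N1) !(eq_sym _ x) xu xx0.
by have := nr_hrealizes N1 u; rewrite (nr_root N1) (nr_base N1) x0_pred // /det3 /=; lra.
Qed.

Lemma W2_right y : y != u2 -> y != y0 -> 0 < k2 (W2 y).
Proof.
move=> yu yy0; have u : uniq [:: u2; y0; y].
  by rewrite uniq3 eq_sym (nr_neq N2) !(eq_sym _ y) yu yy0.
by have := nr_hrealizes N2 u; rewrite (nr_root N2) (nr_base N2) y0_succ // /det3 /=; lra.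
Qed.

Definition join_vec (s : R) (a : raw) : v3 :=
  match a with
  | None => e3
  | Some (inl x) => shear32 (- s) (W1 x)
  | Some (inr y) => shear32 s (W2 y)
  end.

Definition join_det (s : R) (a b c : raw) : R :=
  det3 (join_vec s a) (join_vec s b) (join_vec s c).

Lemma join_det_affine s a b c :
  join_det s a b c = join_det 0 a b c + s * (join_det 1 a b c - join_det 0 a b c).
Proof.
by case: a => [[?|?]|]; case: b => [[?|?]|]; case: c => [[?|?]|];
  rewrite /join_det /det3 /= ; ring.
Qed.

Lemma exists_large_shear : exists s, forall a b c v,
  has_sign v (join_det 1 a b c - join_det 0 a b c) -> has_sign v (join_det s a b c).
Proof.
suff [s Hs] : eventually (fun s => forall a b c v,
    has_sign v (join_det 1 a b c - join_det 0 a b c) -> has_sign v (join_det s a b c)).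
  by exists s; apply: Hs (Rle_refl s).
apply: eventually_forall => a; apply: eventually_forall => b; apply: eventually_forall => c.
have [s0 Hs0] := eventually_sign (join_det 0 a b c) (join_det 1 a b c - join_det 0 a b c).
by exists s0 => s hs v; rewrite (join_det_affine s); apply: Hs0.
Qed.

Lemma join_vec_in1 s a x : in1 a = Some x -> join_vec s a = shear32 (- s) (W1 x).
Proof. by case: a => [[?|?]|] //= [->]. Qed.

Lemma join_vec_in2 s a y : in_join a -> in2 a = Some y -> join_vec s a = shear32 s (W2 y).
Proof.
case: a => [[x|?]|] //= _; last by case=> ->.
case: eqP => // -> [<-]; rewrite (nr_base N1) (nr_base N2) /shear32 /=.
by congr V3; ring.
Qed.

Lemma in1_neq_root a x : in_join a -> in1 a = Some x -> x != u1.
Proof. by case: a => [[?|?]|] //= ? [<-]. Qed.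

Lemma in2_neq_root a y : in_join a -> in2 a = Some y -> y != u2.
Proof.
case: a => [[x|?]|] //=; last by case/andP=> ? _ [<-].
by move=> _; case: eqP => // _ [<-]; apply: (nr_neq N2).
Qed.

Lemma in1_neq (a b : raw) x y : a != b -> in1 a = Some x -> in1 b = Some y -> x != y.
Proof.
by case: a => [[?|?]|] //; case: b => [[?|?]|] //= ab [<-] [<-]; apply: contra ab => /eqP ->.
Qed.

Lemma in2_neq a b x y : in_join a -> in_join b -> a != b ->
  in2 a = Some x -> in2 b = Some y -> x != y.
Proof.
case: a => [[xa|ya]|] //; case: b => [[xb|yb]|] //=.
- move=> _ _ ab; case: eqP => // Ea; case: eqP => // Eb.
  by rewrite Ea Eb eqxx in ab.
- by move=> _ /andP [_ yb0] _; case: eqP => // _ [<-] [<-]; rewrite eq_sym.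
- by move=> /andP [_ ya0] _ _; case: eqP => // _ [<-] [<-].
- by move=> _ _ ab [<-] [<-]; apply: contra ab => /eqP ->.
Qed.

Lemma in1'P a : in1' a -> exists2 x, a = Some (inl x) & x != x0.
Proof.
case: a => [[x|?]|] //; rewrite /Defs.in1' /is_x0 /= => h.
by exists x => //; apply: contra h => /eqP ->.
Qed.

Lemma in2'P a : in_join a -> in2' a -> exists y, [/\ a = Some (inr y), y != u2 & y != y0].
Proof.
case: a => [[x|y]|] //=; rewrite /Defs.in2' /is_x0 /=; last first.
  by case/andP=> yu yy0 _; exists y.
by move=> _; case: ifP => [/eqP -> | //]; rewrite eqxx andbF.
Qed.

Lemma det3_shear32_mixed_l s p q r :
  det3 (shear32 (- s) p) (shear32 (- s) q) (shear32 s r)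
  = det3 p q r + s * (2 * k2 r * det3 p q e3).
Proof. by rewrite /det3 /=; ring. Qed.

Lemma det3_shear32_mixed_r s p q r :
  det3 (shear32 (- s) p) (shear32 s q) (shear32 s r)
  = det3 p q r + s * (2 * - k2 p * det3 e3 q r).
Proof. by rewrite /det3 /=; ring. Qed.

Section Sheared.
Variable s : R.
Hypothesis s_large : forall a b c v,
  has_sign v (join_det 1 a b c - join_det 0 a b c) -> has_sign v (join_det s a b c).

Section Rules.
Variables a b c : raw.
Hypotheses (ia : in_join a) (ib : in_join b) (ic : in_join c).

Lemma sign_X1_root x y : a != b -> in1 a = Some x -> in1 b = Some y ->
  has_sign (chi1 x y u1) (join_det s a b None).
Proof.
move=> ab ea eb; rewrite /join_det (join_vec_in1 s ea) (join_vec_in1 s eb) /=.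
rewrite (_ : det3 _ _ _ = det3 (W1 x) (W1 y) (W1 u1)); last by rewrite (nr_root N1) /det3 /=; ring.
apply: (nr_hrealizes N1).
by rewrite uniq3 (in1_neq ab ea eb) (in1_neq_root ia ea) (in1_neq_root ib eb).
Qed.

Lemma sign_X2_root x y : a != b -> in2 a = Some x -> in2 b = Some y ->
  has_sign (chi2 x y u2) (join_det s a b None).
Proof.
move=> ab ea eb; rewrite /join_det (join_vec_in2 s ia ea) (join_vec_in2 s ib eb) /=.
rewrite (_ : det3 _ _ _ = det3 (W2 x) (W2 y) (W2 u2)); last by rewrite (nr_root N2) /det3 /=; ring.
apply: (nr_hrealizes N2).
by rewrite uniq3 (in2_neq ia ib ab ea eb) (in2_neq_root ia ea) (in2_neq_root ib eb).
Qed.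

Lemma sign_X1X2_root : in1' a -> in2' b -> has_sign true (join_det s a b None).
Proof.
move=> /in1'P [x Ea xx0] /(in2'P ib) [y [-> yu yy0]].
have xu : x != u1 by move: ia; rewrite Ea.
rewrite Ea.
have := nr_chart N1 xu; have := nr_chart N2 yu.
have := W1_left xu xx0; have := W2_right yu yy0.
by rewrite /join_det /det3 /=; nra.
Qed.

Lemma sign_X1 x y z : uniq [:: a; b; c] ->
  in1 a = Some x -> in1 b = Some y -> in1 c = Some z ->
  has_sign (chi1 x y z) (join_det s a b c).
Proof.
rewrite uniq3 => /and3P [ab ac bc] ea eb ec.
rewrite /join_det (join_vec_in1 s ea) (join_vec_in1 s eb) (join_vec_in1 s ec) det3_shear32.
by apply: (nr_hrealizes N1); rewrite uniq3 (in1_neq ab ea eb) (in1_neq ac ea ec) (in1_neq bc eb ec).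
Qed.

Lemma sign_X2 x y z : uniq [:: a; b; c] ->
  in2 a = Some x -> in2 b = Some y -> in2 c = Some z ->
  has_sign (chi2 x y z) (join_det s a b c).
Proof.
rewrite uniq3 => /and3P [ab ac bc] ea eb ec.
rewrite /join_det (join_vec_in2 s ia ea) (join_vec_in2 s ib eb) (join_vec_in2 s ic ec) det3_shear32.
apply: (nr_hrealizes N2).
by rewrite uniq3 (in2_neq ia ib ab ea eb) (in2_neq ia ic ac ea ec) (in2_neq ib ic bc eb ec).
Qed.

Lemma sign_X1X1X2 x y : uniq [:: a; b; c] ->
  in1 a = Some x -> in1 b = Some y -> in2' c ->
  has_sign (chi1 x y u1) (join_det s a b c).
Proof.
rewrite uniq3 => /and3P [ab _ _] ea eb /(in2'P ic) [z [Ec zu zy0]].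
apply: s_large.
rewrite /join_det !(join_vec_in1 _ ea) !(join_vec_in1 _ eb) Ec /= !det3_shear32_mixed_l.
rewrite (_ : _ - _ = 2 * k2 (W2 z) * det3 (W1 x) (W1 y) (W1 u1));
  last by rewrite (nr_root N1); ring.
apply/has_signM; first by have := W2_right zu zy0; lra.
apply: (nr_hrealizes N1).
by rewrite uniq3 (in1_neq ab ea eb) (in1_neq_root ia ea) (in1_neq_root ib eb).
Qed.

Lemma sign_X1X2X2 y z : uniq [:: a; b; c] ->
  in1' a -> in2 b = Some y -> in2 c = Some z ->
  has_sign (chi2 u2 y z) (join_det s a b c).
Proof.
rewrite uniq3 => /and3P [_ _ bc] /in1'P [x Ea xx0] eb ec.
have xu : x != u1 by move: ia; rewrite Ea.
apply: s_large.
rewrite /join_det Ea !(join_vec_in2 _ ib eb) !(join_vec_in2 _ ic ec) /= !det3_shear32_mixed_r.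
rewrite (_ : _ - _ = 2 * - k2 (W1 x) * det3 (W2 u2) (W2 y) (W2 z));
  last by rewrite (nr_root N2); ring.
apply/has_signM; first by have := W1_left xu xx0; lra.
apply: (nr_hrealizes N2).
by rewrite uniq3 (in2_neq ib ic bc eb ec) !(eq_sym u2) (in2_neq_root ib eb) (in2_neq_root ic ec).
Qed.

End Rules.

Lemma join_rule_sign a b c v : in_join a -> in_join b -> in_join c -> uniq [:: a; b; c] ->
  rule a b c = Some v -> has_sign v (join_det s a b c).
Proof.
move=> ia ib ic u; have := u; rewrite uniq3 => /and3P [ab ac bc].
rewrite /join_rule; case: c ic u ac bc => [c|] ic u ac bc;
  [case: ifP => _; [by [] |] |]; case_memberships; first [by [] | case=> <-];
  solve [ eapply sign_X1; eassumption | eapply sign_X2; eassumption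
        | eapply sign_X1X1X2; eassumption | eapply sign_X1X2X2; eassumption
        | eapply sign_X1_root; eassumption | eapply sign_X2_root; eassumption
        | eapply sign_X1X2_root; eassumption ].
Qed.


Lemma join_kind (a : raw) : [\/ a = None, a = Some (inl x0),
  exists2 x, a = Some (inl x) & x != x0 | exists y, a = Some (inr y)].
Proof.
case: a => [[x|y]|]; last by constructor 1.
  by case: (eqVneq x x0) => [-> | xx0]; [constructor 2 | constructor 3; exists x].
by constructor 4; exists y.
Qed.

Lemma is_x0_inl x : @is_x0 T1 T2 chi1 u1 (Some (inl x)) = (x == x0).
Proof. by apply/eqP/eqP => [[] | ->]. Qed.

Lemma join_rule_total a b c : uniq [:: a; b; c] ->
  has isSome [:: rule a b c; rule b c a; rule c a b; omap negb (rule b a c);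
                 omap negb (rule a c b); omap negb (rule c b a)].
Proof.
rewrite uniq3.
case: (join_kind a) => [->|->|[x -> hx]|[y ->]];
case: (join_kind b) => [->|->|[x1 -> hx1]|[y1 ->]];
case: (join_kind c) => [->|->|[x2 -> hx2]|[y2 ->]];
rewrite ?eqxx ?andbF //= => _;
rewrite /join_rule /Defs.in1' /Defs.in2' /Defs.in2 /= ?is_x0_inl ?eqxx
  ?(negbTE hx) ?(negbTE hx1) ?(negbTE hx2) //=.
Qed.

Lemma join_chi_raw_sign a b c : in_join a -> in_join b -> in_join c -> uniq [:: a; b; c] ->
  has_sign (join_chi_raw chi1 u1 chi2 u2 a b c) (join_det s a b c).
Proof.
move=> ia ib ic u.
apply: (first_some_spec (P := fun v => has_sign v (join_det s a b c))); last exact: join_rule_total.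
have rot := uniq3_rot u; have rot2 := uniq3_rot rot.
have sw := uniq3_swap u; have swrot := uniq3_rot sw; have swrot2 := uniq3_rot swrot.
have Hneg a' b' c' w : in_join a' -> in_join b' -> in_join c' -> uniq [:: a'; b'; c'] ->
    join_det s a' b' c' = - join_det s a b c ->
    Some w = omap negb (rule a' b' c') -> has_sign w (join_det s a b c).
  move=> ia' ib' ic' u' D'; case E: (rule a' b' c') => [w'|] //= [->].
  by apply/has_signN; rewrite -D'; apply: join_rule_sign E.
move=> v; rewrite !inE => /or4P [| | |/or3P [| |]] /eqP Ev.
- exact: join_rule_sign u (esym Ev).
- by rewrite /join_det -det3_rot; apply: join_rule_sign rot (esym Ev).
- by rewrite /join_det det3_rot; apply: join_rule_sign rot2 (esym Ev).
- by apply: (Hneg b a c v ib ia ic sw _ Ev); rewrite /join_det det3_swap.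
- by apply: (Hneg a c b v ia ic ib swrot _ Ev); rewrite /join_det -det3_rot det3_swap det3_rot.
- by apply: (Hneg c b a v ic ib ia swrot2 _ Ev); rewrite /join_det det3_rot det3_swap -det3_rot.
Qed.

Lemma join_hrealizes : hrealizes chi3 (fun a => join_vec s (val a)).
Proof.
move=> a b c u; apply: join_chi_raw_sign; try exact: valP.
by move: u; rewrite -(map_inj_uniq val_inj).
Qed.

End Sheared.

Lemma join_realizable_extreme :
  realizable chi3 /\ extreme chi3 root.
Proof.
have [s Hs] := exists_large_shear.
have HJ := join_hrealizes Hs.
have chart : in_chart root (fun a => join_vec s (val a)).
  case=> [[[x|y]|] ia] // _ /=; [exact: (nr_chart N1 ia) | exact: (nr_chart N2 (proj1 (andP ia)))].
split; first exact: (realizable_of_chart (u := root) HJ erefl chart).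
pose e0 : @join_type T1 T2 u1 chi2 u2 := exist _ (Some (inl x0)) (nr_neq N1).
have [y [yr Hy]] := chart_succ (u := root) (w := e0) HJ erefl chart isT.
by exists y; split => //; exists true.
Qed.

End Join.

Theorem proposition2p2 (T1 T2 : finType)
  (chi1 : T1 -> T1 -> T1 -> bool) (u1 : T1)
  (chi2 : T2 -> T2 -> T2 -> bool) (u2 : T2) :
  rooted_realizable chi1 u1 ->
  rooted_realizable chi2 u2 ->
  chirotope (@join_chi T1 T2 chi1 u1 chi2 u2) /\
  realizable (@join_chi T1 T2 chi1 u1 chi2 u2) /\
  extreme (@join_chi T1 T2 chi1 u1 chi2 u2) (@join_root T1 T2 u1 chi2 u2).
Proof.
move=> [[_ ext1] real1] [[_ ext2] real2].
have [W1 N1] := normal_form_pred real1 ext1.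
have [W2 N2] := normal_form_succ real2 ext2.
have [R3 E3] := join_realizable_extreme N1 N2 (pred_spec real1 ext1).2 (succ_spec real2 ext2).2.
by split; [apply: realizable_chirotope | split].
Qed.
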